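(* Let $N=2^\ell$ ($\ell$ a positive integer), $C_2\subseteq C_1\subseteq\mathbb{F}_2^n$ linear codes, $y_x,y_z\in\mathbb{F}_2^n$, and $Q=Q(C_1,C_2,y_x,y_z)$. For $b\in\mathbb{Z}_N^n$ let $b_{y_z}\in\mathbb{Z}_N^n$ be given by $(b_{y_z})_i=b_i$ if $(y_z)_i=0$ and $(b_{y_z})_i=-b_i$ if $(y_z)_i=1$. Then $U(b)$ fixes $Q$ (i.e. $U(b)Q=Q$) if and only if $U(b_{y_z})$ fixes $Q'=Q(C_1,C_2,0,0)$.
   Context: $\omega=e^{2\pi\mathbf{i}/N}$; for $a\in\mathbb{Z}_N$, $U(a)=\mathrm{diag}(1,\omega^a)$ in the computational basis $\{|0\rangle,|1\rangle\}$ of $\mathbb{C}^2$, and $U(b)=\bigotimes_{i=1}^nU(b_i)$ on $(\mathbb{C}^2)^{\otimes n}$. With $X,Z$ the Pauli matrices and $X(u)=\bigotimes X^{u_i}$, $Z(v)=\bigotimes Z^{v_i}$, the CSS code $Q(C_1,C_2,y_x,y_z)$ is the subspace of $(\mathbb{C}^2)^{\otimes n}$ stabilized by all operators $(-1)^{y_x\cdot u+y_z\cdot v}X(u)Z(v)$ with $u\in C_2$, $v\in C_1^\perp$. *)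

From HB Require Import structures.
From mathcomp Require Import all_boot all_order all_algebra all_field.
Set Implicit Arguments. Unset Strict Implicit. Unset Printing Implicit Defensive.
Import Order.TTheory GRing.Theory Num.Theory.
Local Open Scope ring_scope.

(* omega = e^{2 pi i / N} with N = 2^l (l >= 1): (2^(l-1)).-root (-1) is the
   root of -1 of minimal nonnegative argument, i.e. e^{i pi / 2^(l-1)}. *)
Definition omega (l : nat) : algC := (2 ^ l.-1)%N.-root (-1).

(* Hilbert space (C^2)^{(x) n}: functions on the computational basis {0,1}^n. *)
Notation qstate n := {ffun 'rV['F_2]_n -> algC}.

Definition bit (a : 'F_2) : 'I_2 := if a == 0 then ord0 else ord_max.

(* tensor product  (x)_i A_i  acting on (C^2)^{(x) n}, in the computational basis *)
Definition tens (n : nat) (A : 'I_n -> 'M[algC]_2) (psi : qstate n) : qstate n :=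
  [ffun x : 'rV['F_2]_n => \sum_(y : 'rV['F_2]_n) (\prod_(i < n) A i (bit (x 0 i)) (bit (y 0 i))) * psi y].

Definition Umat (l : nat) (a : 'Z_(2 ^ l)) : 'M[algC]_2 :=
  \matrix_(i, j) (if i == j then (if i == ord0 then 1 else omega l ^+ (val a)) else 0).
Definition Xmat : 'M[algC]_2 := \matrix_(i, j) (if i == j then 0 else 1).
Definition Zmat : 'M[algC]_2 :=
  \matrix_(i, j) (if i == j then (if i == ord0 then 1 else -1) else 0).

Definition Uop (l n : nat) (b : 'rV['Z_(2 ^ l)]_n) : qstate n -> qstate n :=
  tens (fun i => Umat (b 0 i)).
Definition Xop (n : nat) (u : 'rV['F_2]_n) : qstate n -> qstate n :=
  tens (fun i => Xmat ^+ (val (u 0 i))).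
Definition Zop (n : nat) (v : 'rV['F_2]_n) : qstate n -> qstate n :=
  tens (fun i => Zmat ^+ (val (v 0 i))).

Definition dotF2 (n : nat) (u v : 'rV['F_2]_n) : 'F_2 := \sum_(i < n) u 0 i * v 0 i.

Definition dual_code (n : nat) (C : {vspace 'rV['F_2]_n}) : pred 'rV['F_2]_n :=
  fun v => [forall c : 'rV['F_2]_n, (c \in C) ==> (dotF2 v c == 0)].

Definition CSS (n : nat) (C1 C2 : {vspace 'rV['F_2]_n}) (yx yz : 'rV['F_2]_n)
  (psi : qstate n) : Prop :=
  forall u v, u \in C2 -> dual_code C1 v ->
    [ffun x => (-1) ^+ val (dotF2 yx u + dotF2 yz v) * Xop u (Zop v psi) x] = psi.

Definition fixes (n : nat) (U : qstate n -> qstate n) (Q : qstate n -> Prop) : Prop :=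
  forall phi, Q phi <-> exists2 psi, Q psi & U psi = phi.

Definition flip (l n : nat) (b : 'rV['Z_(2 ^ l)]_n) (yz : 'rV['F_2]_n) :
  'rV['Z_(2 ^ l)]_n := \row_i (if yz 0 i == 0 then b 0 i else - b 0 i).

From HB Require Import structures.
From mathcomp Require Import all_boot all_order all_algebra all_field.
Import GRing.Theory Num.Theory.
Local Open Scope ring_scope.
Set Implicit Arguments. Unset Strict Implicit. Unset Printing Implicit Defensive.

(* The Pauli operator Z(y_x) X(y_z) carries Q onto Q': commuting it past the
   stabilizers X(u) Z(v) produces exactly the signs (-1)^(y_x.u + y_z.v).
   The diagonal gate U(b) commutes with Z(y_x), while conjugating U(a) by X
   gives omega^a U(-a); hence conjugation by Z(y_x) X(y_z) turns U(b) into a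
   nonzero multiple of U(b_{y_z}), and fixing a subspace is invariant under
   both conjugation and nonzero rescaling. *)

Lemma F2P (a : 'F_2) : a = 0 \/ a = 1.
Proof. by case: a => [[|[|k]]] //= Hk; [left | right]; apply: val_inj. Qed.

Lemma addrr_F2 (V : lmodType 'F_2) (v : V) : v + v = 0.
Proof.
have two0 : (2%:R : 'F_2) = 0 by apply: val_inj.
by rewrite -mulr2n -scaler_nat two0 scale0r.
Qed.

Definition sgnF2 (a : 'F_2) : algC := (-1) ^+ val a.

Lemma sgnF2D (a c : 'F_2) : sgnF2 (a + c) = sgnF2 a * sgnF2 c.
Proof.
by case: (F2P a) => ->; case: (F2P c) => ->;
  rewrite /sgnF2 /= ?expr0 ?expr1 ?mulrNN ?mul1r ?mulr1.
Qed.

Lemma sgnF2K (a : 'F_2) : sgnF2 a * sgnF2 a = 1.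
Proof. by rewrite -sgnF2D (addrr_F2 (a : ('F_2)^o)). Qed.

Lemma sgnF2_sum (I : finType) (F : I -> 'F_2) :
  sgnF2 (\sum_i F i) = \prod_i sgnF2 (F i).
Proof. exact: (big_morph sgnF2 sgnF2D). Qed.

Section DotF2.
Variable n : nat.
Implicit Types u v w : 'rV['F_2]_n.

Lemma dotF2Dl u v w : dotF2 (u + v) w = dotF2 u w + dotF2 v w.
Proof. by rewrite /dotF2 -big_split; apply: eq_bigr => i _; rewrite mxE mulrDl. Qed.

Lemma dotF2Dr u v w : dotF2 u (v + w) = dotF2 u v + dotF2 u w.
Proof. by rewrite /dotF2 -big_split; apply: eq_bigr => i _; rewrite mxE mulrDr. Qed.

Lemma dotF2C u v : dotF2 u v = dotF2 v u.
Proof. by apply: eq_bigr => i _; rewrite mulrC. Qed.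

End DotF2.

Section Omega.
Variable l : nat.
Hypothesis l_gt0 : (0 < l)%N.

Lemma omega_exp_order : omega l ^+ (2 ^ l) = 1.
Proof.
have -> : (2 ^ l = 2 ^ l.-1 * 2)%N by rewrite -expnSr prednK.
by rewrite exprM rootCK ?expn_gt0 // expr2 mulrNN mulr1.
Qed.

Lemma omega_neq0 : omega l != 0.
Proof.
apply: contra_eq_neq omega_exp_order => ->.
by rewrite expr0n expn_eq0 eq_sym oner_eq0.
Qed.

Lemma omega_expZpD (a c : 'Z_(2 ^ l)) :
  omega l ^+ val (a + c) = omega l ^+ val a * omega l ^+ val c.
Proof.
have two_l_gt1 : (1 < 2 ^ l)%N by rewrite -[1%N](expn0 2) ltn_exp2l.
have -> : val (a + c) = ((val a + val c) %% (Zp_trunc (2 ^ l)).+2)%N by [].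
by rewrite expr_mod ?exprD // Zp_cast // omega_exp_order.
Qed.

End Omega.

Lemma tens_monomialE n (A : 'I_n -> 'M[algC]_2) (c : 'rV['F_2]_n)
    (w : 'I_n -> 'F_2 -> algC) :
    (forall i a e, A i (bit a) (bit e) = (e == a + c 0 i)%:R * w i a) ->
  forall psi x, tens A psi x = (\prod_i w i (x 0 i)) * psi (x + c).
Proof.
move=> Aw psi x; rewrite ffunE (bigD1 (x + c)) //= [X in _ + X]big1 ?addr0 => [|y y_neq].
  by congr (_ * _); apply: eq_bigr => i _; rewrite Aw mxE eqxx mul1r.
have [i y_neq_i] : exists i, y 0 i != (x + c) 0 i.
  apply/existsP; rewrite -negb_forall; apply: contra y_neq => /forallP y_eq.
  by apply/eqP/rowP => i; apply/eqP.
have xc_i : (x + c) 0 i = x 0 i + c 0 i by rewrite mxE.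
by rewrite (bigD1 i) //= Aw -xc_i (negbTE y_neq_i) !mul0r.
Qed.

Section Gates.
Variable n : nat.
Implicit Types (psi : qstate n) (x u v : 'rV['F_2]_n).

Definition qscale (k : algC) psi : qstate n := [ffun x => k * psi x].

Definition phase l (b : 'rV['Z_(2 ^ l)]_n) x : algC :=
  \prod_i (if x 0 i == 0 then 1 else omega l ^+ val (b 0 i)).

Lemma UopE l (b : 'rV['Z_(2 ^ l)]_n) psi x : Uop b psi x = phase b x * psi x.
Proof.
pose w i (a : 'F_2) := if a == 0 then 1 else omega l ^+ val (b 0 i).
rewrite /Uop (@tens_monomialE _ _ 0 w) ?addr0 // => i a e; rewrite !mxE addr0.
by case: (F2P a) => ->; case: (F2P e) => ->; rewrite /= ?mul1r ?mul0r.
Qed.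

Lemma XopE u psi x : Xop u psi x = psi (x + u).
Proof.
rewrite /Xop (@tens_monomialE _ _ u (fun _ _ => 1)) ?big1 ?mul1r // => i a e.
by rewrite mulr1; case: (F2P (u 0 i)) => ->; case: (F2P a) => ->; case: (F2P e) => ->;
  rewrite ?expr0 ?expr1 !mxE.
Qed.

Lemma ZopE v psi x : Zop v psi x = sgnF2 (dotF2 v x) * psi x.
Proof.
rewrite /Zop (@tens_monomialE _ _ 0 (fun i a => sgnF2 (v 0 i * a))) ?addr0 ?sgnF2_sum //.
move=> i a e; rewrite mxE addr0.
by case: (F2P (v 0 i)) => ->; case: (F2P a) => ->; case: (F2P e) => ->;
  rewrite ?expr0 ?expr1 !mxE /= ?mul0r ?mulr0 ?mul1r ?mulr1 // /sgnF2 /= expr1.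
Qed.

Lemma qscaleE k psi x : qscale k psi x = k * psi x.
Proof. by rewrite ffunE. Qed.

Lemma qscaleA a c psi : qscale a (qscale c psi) = qscale (a * c) psi.
Proof. by apply/ffunP => x; rewrite !qscaleE mulrA. Qed.

Lemma qscale1 psi : qscale 1 psi = psi.
Proof. by apply/ffunP => x; rewrite qscaleE mul1r. Qed.

Lemma Xop_qscale u k psi : Xop u (qscale k psi) = qscale k (Xop u psi).
Proof. by apply/ffunP => x; rewrite !(XopE, qscaleE). Qed.

Lemma Zop_qscale v k psi : Zop v (qscale k psi) = qscale k (Zop v psi).
Proof. by apply/ffunP => x; rewrite !(ZopE, qscaleE) mulrCA. Qed.

Lemma qscaleK k : k != 0 -> cancel (qscale k) (qscale k^-1).
Proof. by move=> k_neq0 psi; rewrite qscaleA mulVf ?qscale1. Qed.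

Lemma qscaleKV k : k != 0 -> cancel (qscale k^-1) (qscale k).
Proof. by move=> k_neq0 psi; rewrite qscaleA mulfV ?qscale1. Qed.

Lemma XopK u : involutive (Xop u).
Proof. by move=> psi; apply/ffunP => x; rewrite !XopE -addrA addrr_F2 addr0. Qed.

Lemma ZopK v : involutive (Zop v).
Proof. by move=> psi; apply/ffunP => x; rewrite !ZopE mulrA sgnF2K mul1r. Qed.

Lemma XopC u w psi : Xop u (Xop w psi) = Xop w (Xop u psi).
Proof. by apply/ffunP => x; rewrite !XopE addrAC. Qed.

Lemma ZopC v w psi : Zop v (Zop w psi) = Zop w (Zop v psi).
Proof. by apply/ffunP => x; rewrite !ZopE mulrCA. Qed.

Lemma Zop_Xop v u psi :
  Zop v (Xop u psi) = qscale (sgnF2 (dotF2 v u)) (Xop u (Zop v psi)).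
Proof.
apply/ffunP => x; rewrite qscaleE !(ZopE, XopE) dotF2Dr sgnF2D.
by rewrite mulrCA !mulrA -(mulrA (sgnF2 (dotF2 v x))) sgnF2K mulr1.
Qed.

Lemma Xop_Zop u v psi :
  Xop u (Zop v psi) = qscale (sgnF2 (dotF2 u v)) (Zop v (Xop u psi)).
Proof.
apply/ffunP => x; rewrite qscaleE !(ZopE, XopE).
by rewrite dotF2Dr sgnF2D (dotF2C u v) mulrCA mulrA.
Qed.

End Gates.

Section Phase.
Variables (l n : nat).
Hypothesis l_gt0 : (0 < l)%N.
Implicit Types (b : 'rV['Z_(2 ^ l)]_n) (c v x : 'rV['F_2]_n) (psi : qstate n).

Lemma phase_neq0 b x : phase b x != 0.
Proof.
rewrite prodf_seq_neq0; apply/allP => i _ /=.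
by case: ifP => _; [exact: oner_neq0 | exact/expf_neq0/omega_neq0].
Qed.

Lemma phase_shift b c x : phase b (x + c) = phase b c * phase (flip b c) x.
Proof.
rewrite /phase -big_split; apply: eq_bigr => i _ /=; rewrite !mxE.
case: (F2P (c 0 i)) => ->; case: (F2P (x 0 i)) => ->; rewrite ?mul1r ?mulr1 //.
rewrite (addrr_F2 (1 : ('F_2)^o)) eqxx (_ : (1 == 0 :> 'F_2) = false) //.
by rewrite -omega_expZpD // subrr expr0.
Qed.

Lemma Uop_Zop b v psi : Uop b (Zop v psi) = Zop v (Uop b psi).
Proof. by apply/ffunP => x; rewrite !(UopE, ZopE) mulrCA. Qed.

Lemma Xop_Uop b c psi :
  Xop c (Uop b psi) = qscale (phase b c) (Uop (flip b c) (Xop c psi)).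
Proof. by apply/ffunP => x; rewrite qscaleE !(XopE, UopE) phase_shift mulrA. Qed.

End Phase.

Section Fixes.
Variable n : nat.
Implicit Types (U : qstate n -> qstate n) (P Q : qstate n -> Prop).

Lemma fixes_conj (f : qstate n -> qstate n) U U' P Q :
    involutive f -> (forall psi, P psi -> Q (f psi)) ->
    (forall psi, Q psi -> P (f psi)) -> (forall psi, U' (f psi) = f (U psi)) ->
  fixes U P <-> fixes U' Q.
Proof.
move=> fK PQ QP fU.
have fixes_to V V' R S : (forall psi, R psi -> S (f psi)) ->
    (forall psi, S psi -> R (f psi)) -> (forall psi, V' (f psi) = f (V psi)) ->
    fixes V R -> fixes V' S.
  move=> RS SR fV fixV phi; split.
    move=> /SR /fixV [psi Rpsi Vpsi]; exists (f psi); first exact: RS.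
    by rewrite fV Vpsi fK.
  case=> psi /SR Rfpsi <-; rewrite -[psi in V' psi]fK fV.
  by apply/RS/(fixV _).2; exists (f psi).
have fU' psi : U (f psi) = f (U' psi) by rewrite -[psi in U' psi]fK fU fK.
by split; apply: fixes_to.
Qed.

Lemma fixes_qscale k U P : k != 0 -> (forall a psi, P psi -> P (qscale a psi)) ->
  fixes (fun psi => qscale k (U psi)) P <-> fixes U P.
Proof.
move=> k_neq0 P_qscale; split=> fixU phi; split.
- move=> /(P_qscale k) /fixU [psi Ppsi kU_psi]; exists psi => //.
  by apply: (can_inj (qscaleK k_neq0)).
- by case=> psi Ppsi <-; rewrite -(qscaleK k_neq0 (U psi)); apply/P_qscale/fixU; exists psi.
- move=> /(P_qscale k^-1) /fixU [psi Ppsi U_psi]; exists psi => //.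
  by rewrite U_psi qscaleKV.
- by case=> psi Ppsi <-; apply/P_qscale/fixU; exists psi.
Qed.

End Fixes.

Section CSS.
Variables (n : nat) (C1 C2 : {vspace 'rV['F_2]_n}).
Implicit Types (a yx yz : 'rV['F_2]_n) (psi : qstate n).

Lemma CSSP yx yz psi :
  CSS C1 C2 yx yz psi <-> forall u v, u \in C2 -> dual_code C1 v ->
    qscale (sgnF2 (dotF2 yx u + dotF2 yz v)) (Xop u (Zop v psi)) = psi.
Proof. by []. Qed.

Lemma CSS_qscale yx yz k psi :
  CSS C1 C2 yx yz psi -> CSS C1 C2 yx yz (qscale k psi).
Proof.
move/CSSP=> stab; apply/CSSP => u v u_C2 v_dual.
by rewrite -{2}(stab u v u_C2 v_dual) Zop_qscale Xop_qscale !qscaleA mulrC.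
Qed.

Lemma CSS_Zop a yx yz psi :
  CSS C1 C2 yx yz psi -> CSS C1 C2 (yx + a) yz (Zop a psi).
Proof.
move/CSSP=> stab; apply/CSSP => u v u_C2 v_dual.
rewrite -{2}(stab u v u_C2 v_dual) Zop_qscale Zop_Xop ZopC qscaleA -sgnF2D.
by rewrite dotF2Dl addrAC.
Qed.

Lemma CSS_Xop a yx yz psi :
  CSS C1 C2 yx yz psi -> CSS C1 C2 yx (yz + a) (Xop a psi).
Proof.
move/CSSP=> stab; apply/CSSP => u v u_C2 v_dual.
rewrite -{2}(stab u v u_C2 v_dual) Xop_qscale XopC (Xop_Zop a v) Xop_qscale qscaleA -sgnF2D.
by rewrite dotF2Dl addrA.
Qed.

End CSS.

Unset Implicit Arguments.

Theorem proposition2p7 (l n : nat) (hl : (0 < l)%N)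
  (C1 C2 : {vspace 'rV['F_2]_n}) (hC : (C2 <= C1)%VS)
  (yx yz : 'rV['F_2]_n) (b : 'rV['Z_(2 ^ l)]_n) :
  fixes (Uop b) (CSS C1 C2 yx yz) <-> fixes (Uop (flip b yz)) (CSS C1 C2 0 0).
Proof.
have Z_step : fixes (Uop b) (CSS C1 C2 yx yz) <-> fixes (Uop b) (CSS C1 C2 0 yz).
  apply: fixes_conj (ZopK yx) _ _ (fun psi => Uop_Zop b yx psi).
    by move=> psi /(CSS_Zop yx); rewrite addrr_F2.
  by move=> psi /(CSS_Zop yx); rewrite add0r.
have X_step : fixes (Uop b) (CSS C1 C2 0 yz) <->
    fixes (fun psi => qscale (phase b yz) (Uop (flip b yz) psi)) (CSS C1 C2 0 0).
  apply: fixes_conj (XopK yz) _ _ (fun psi => esym (Xop_Uop hl b yz psi)).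
    by move=> psi /(CSS_Xop yz); rewrite addrr_F2.
  by move=> psi /(CSS_Xop yz); rewrite add0r.
have scale_step := fixes_qscale (Uop (flip b yz)) (phase_neq0 hl b yz)
  (@CSS_qscale n C1 C2 0 0).
exact: iff_trans Z_step (iff_trans X_step scale_step).
Qed.
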